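(* Let $k\ge1$. For every $1\le j\le k$, the function $D_{k,j}$ is nonincreasing on $[0,1)$.
   Context: For an integer $k\ge1$, $f_k:[0,1]\to[0,1]$ denotes the unique decreasing function satisfying $f_k(x)^k-f_k(x)^{k+1}=x^k-x^{k+1}$ for all $x\in[0,1]$; it is continuous with $f_k(0)=1$, $f_k(1)=0$. For $1\le j\le k$ and $y\in[0,1)$ define $T_{k,j}(y):=\dfrac{(1-y)\,y^{j-1}}{f_k(y)^j}$ and $D_{k,j}(y):=T_{k,1}(y)+T_{k,2}(y)+\dots+T_{k,j}(y)$. *)

From Stdlib Require Import Reals Lra.
Open Scope R_scope.

(* f is "the" function f_k: decreasing [0,1] -> [0,1] with
   f(x)^k - f(x)^(k+1) = x^k - x^(k+1).  (Unique, as stated in the paper.) *)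
Definition is_fk (k : nat) (f : R -> R) : Prop :=
  (forall x, 0 <= x <= 1 -> 0 <= f x <= 1) /\
  (forall x y, 0 <= x <= 1 -> 0 <= y <= 1 -> x < y -> f y < f x) /\
  (forall x, 0 <= x <= 1 -> f x ^ k - f x ^ (k + 1) = x ^ k - x ^ (k + 1)).

Definition T (f : R -> R) (j : nat) (y : R) : R :=
  (1 - y) * y ^ (j - 1) / f y ^ j.

Fixpoint D (f : R -> R) (j : nat) (y : R) : R :=
  match j with
  | O => 0
  | S i => D f i y + T f (S i) y
  end.

From Stdlib Require Import Reals Lra Lia Psatz.

(* Put [r(y) = y / f_k(y)] and [geom n r = 1 + r + ... + r^(n-1)]. Then
   [D_{k,j}(y) = (1 - y) / f_k(y) * geom j (r(y))], and the equation defining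
   [f_k] forces [D_{k,k} = 1], so [D_{k,j} = geom j r / geom k r]. For [j <= k]
   this ratio is nonincreasing in [r >= 0], while [r(y)] is nondecreasing since
   [f_k] decreases. *)

Definition bump (k : nat) (x : R) : R := x ^ k - x ^ (k + 1).

Lemma derivable_pt_lim_bump k x : (1 <= k)%nat ->
  derivable_pt_lim (bump k) x (x ^ pred k * (INR k - (INR k + 1) * x)).
Proof.
  intros Hk.
  replace (x ^ pred k * (INR k - (INR k + 1) * x))
    with (INR k * x ^ pred k - INR (k + 1) * x ^ pred (k + 1)).
  - exact (derivable_pt_lim_minus (fun x => x ^ k) (fun x => x ^ (k + 1)) x _ _
             (derivable_pt_lim_pow x k) (derivable_pt_lim_pow x (k + 1))).
  - destruct k as [|m]; [lia|]. rewrite plus_INR, Nat.add_1_r. simpl pred. simpl pow. simpl INR. ring.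
Qed.

Lemma bump_mvt k x y : (1 <= k)%nat -> x < y ->
  exists t, x < t < y /\
    bump k y - bump k x = t ^ pred k * (INR k - (INR k + 1) * t) * (y - x).
Proof.
  intros Hk Hxy.
  destruct (MVT_cor2 (bump k) (fun t => t ^ pred k * (INR k - (INR k + 1) * t)) x y Hxy)
    as [t [Ht Hin]]; [|now exists t].
  intros c _. now apply derivable_pt_lim_bump.
Qed.

Lemma bump_strict_incr k x y : (1 <= k)%nat ->
  0 <= x -> x < y -> (INR k + 1) * y <= INR k -> bump k x < bump k y.
Proof.
  intros Hk Hx Hxy Hy.
  destruct (bump_mvt k x y Hk Hxy) as [t [Ht Heq]].
  assert (0 < t ^ pred k) by (apply pow_lt; lra).
  assert (0 < INR k - (INR k + 1) * t) by (pose proof (pos_INR k); nra).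
  assert (0 < t ^ pred k * (INR k - (INR k + 1) * t) * (y - x))
    by (repeat apply Rmult_lt_0_compat; lra).
  lra.
Qed.

Lemma bump_strict_decr k x y : (1 <= k)%nat ->
  INR k <= (INR k + 1) * x -> x < y -> bump k y < bump k x.
Proof.
  intros Hk Hx Hxy.
  destruct (bump_mvt k x y Hk Hxy) as [t [Ht Heq]].
  pose proof (pos_INR k).
  assert (0 < t) by (assert (1 <= INR k) by (apply (le_INR 1); lia); nra).
  assert (0 < t ^ pred k) by (apply pow_lt; lra).
  assert (0 < t ^ pred k * ((INR k + 1) * t - INR k) * (y - x))
    by (repeat apply Rmult_lt_0_compat; nra).
  lra.
Qed.

Fixpoint geom (n : nat) (r : R) : R :=
  match n with
  | O => 0
  | S m => geom m r + r ^ m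
  end.

Lemma geom_succ_l n r : geom (S n) r = 1 + r * geom n r.
Proof.
  induction n as [|n IH]; [simpl; ring|].
  cbn [geom] in *. rewrite IH at 1. simpl pow. ring.
Qed.

Lemma geom_mul_one_sub n r : geom n r * (1 - r) = 1 - r ^ n.
Proof. induction n as [|n IH]; simpl; [ring|]. rewrite Rmult_plus_distr_r, IH. ring. Qed.

Lemma geom_at_1 n : geom n 1 = INR n.
Proof. induction n as [|n IH]; simpl geom; [reflexivity|]. rewrite IH, pow1, S_INR. ring. Qed.

Lemma geom_add m n r : geom (m + n) r = geom m r + r ^ m * geom n r.
Proof.
  induction n as [|n IH]; simpl geom.
  - rewrite Nat.add_0_r. ring.
  - rewrite Nat.add_succ_r. simpl geom. rewrite IH, pow_add. ring.
Qed.

Lemma geom_ge0 n r : 0 <= r -> 0 <= geom n r.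
Proof.
  intros Hr. induction n as [|n IH]; simpl; [lra|].
  pose proof (pow_le r n Hr). lra.
Qed.

Lemma geom_gt0 n r : (1 <= n)%nat -> 0 <= r -> 0 < geom n r.
Proof.
  intros Hn Hr. destruct n as [|n]; [lia|]. rewrite geom_succ_l.
  pose proof (geom_ge0 n r Hr). nra.
Qed.

Lemma geom_le_compat n r1 r2 : 0 <= r1 <= r2 -> geom n r1 <= geom n r2.
Proof.
  intros Hr. induction n as [|n IH]; simpl; [lra|].
  pose proof (pow_incr r1 r2 n Hr). lra.
Qed.

(* [geom n r / r ^ n] is a polynomial in [1 / r] with nonnegative coefficients. *)
Lemma geom_mul_pow_le n r1 r2 : 0 <= r1 <= r2 ->
  geom n r2 * r1 ^ n <= geom n r1 * r2 ^ n.
Proof.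
  intros Hr. induction n as [|n IH]; [simpl; lra|].
  rewrite !geom_succ_l. simpl pow.
  pose proof (pow_incr r1 r2 (S n) Hr). simpl pow in *.
  assert (r2 * r1 * (geom n r2 * r1 ^ n) <= r2 * r1 * (geom n r1 * r2 ^ n))
    by (apply Rmult_le_compat_l; nra).
  nra.
Qed.

Lemma geom_cross_le j k r1 r2 : (j <= k)%nat -> 0 <= r1 <= r2 ->
  geom j r2 * geom k r1 <= geom j r1 * geom k r2.
Proof.
  intros Hjk Hr.
  replace k with (j + (k - j))%nat by lia. rewrite !geom_add.
  pose proof (geom_mul_pow_le j r1 r2 Hr).
  pose proof (geom_le_compat (k - j) r1 r2 Hr).
  pose proof (geom_ge0 (k - j) r1 ltac:(lra)).
  pose proof (geom_ge0 j r2 ltac:(lra)).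
  pose proof (pow_le r1 j ltac:(lra)).
  assert (geom j r2 * r1 ^ j * geom (k - j) r1 <= geom j r1 * r2 ^ j * geom (k - j) r2)
    by (apply Rmult_le_compat; try apply Rmult_le_pos; lra).
  nra.
Qed.

Lemma geom_ratio_antitone j k r1 r2 : (1 <= k)%nat -> (j <= k)%nat ->
  0 <= r1 <= r2 -> geom j r2 / geom k r2 <= geom j r1 / geom k r1.
Proof.
  intros Hk Hjk Hr.
  pose proof (geom_gt0 k r1 ltac:(lia) ltac:(lra)).
  pose proof (geom_gt0 k r2 ltac:(lia) ltac:(lra)).
  apply (Rmult_le_reg_r (geom k r1 * geom k r2)); [nra|].
  field_simplify; try lra.
  pose proof (geom_cross_le j k r1 r2 ltac:(lia) Hr). lra.
Qed.

Lemma D_eq_geom f j y : 0 < f y -> D f j y = (1 - y) / f y * geom j (y / f y).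
Proof.
  intros Hfy. induction j as [|j IH]; simpl; [ring|].
  rewrite IH. unfold T. replace (S j - 1)%nat with j by lia.
  unfold Rdiv. rewrite Rpow_mult_distr, pow_inv. simpl pow.
  field. split; [apply pow_nonzero|]; lra.
Qed.

(* With [y = r v], dividing [bump k y = bump k v] by [v ^ k] gives
   [r ^ k (1 - y) = 1 - v]; multiply the goal by [1 - r <> 0]. *)
Lemma bump_eq_geom k y v : 0 < v -> y <> v -> bump k y = bump k v ->
  (1 - y) * geom k (y / v) = v.
Proof.
  intros Hv Hyv Hbump. set (r := y / v).
  assert (Hy : y = r * v) by (unfold r; field; lra).
  assert (Hr : 1 - r <> 0) by (intro E; apply Hyv; rewrite Hy; replace r with 1 by lra; ring).
  assert (Hvk : v ^ k <> 0) by (apply pow_nonzero; lra).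
  unfold bump in Hbump. rewrite Hy, !pow_add, !Rpow_mult_distr in Hbump. simpl pow in Hbump.
  apply (Rmult_eq_reg_r ((1 - r) * v ^ k)); [|apply Rmult_integral_contrapositive; auto].
  replace ((1 - y) * geom k r * ((1 - r) * v ^ k)) with ((1 - y) * v ^ k * (geom k r * (1 - r))) by ring.
  rewrite geom_mul_one_sub, Hy. nra.
Qed.

Section Fk.

Variables (k : nat) (f : R -> R).
Hypotheses (Hk : (1 <= k)%nat) (Hf : is_fk k f).

Lemma fk_pos y : 0 <= y < 1 -> 0 < f y.
Proof.
  intros Hy. destruct Hf as [Hrange [Hdecr _]].
  pose proof (Hrange 1 ltac:(lra)). pose proof (Hdecr y 1 ltac:(lra) ltac:(lra) ltac:(lra)). lra.
Qed.

Lemma fk_antitone y1 y2 : 0 <= y1 -> y1 <= y2 <= 1 -> f y2 <= f y1.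
Proof.
  intros H1 H12. destruct (Req_dec y1 y2) as [<-|Hne]; [lra|].
  destruct Hf as [_ [Hdecr _]]. left. apply Hdecr; lra.
Qed.

Lemma fk_bump y : 0 <= y <= 1 -> bump k (f y) = bump k y.
Proof. intros Hy. destruct Hf as [_ [_ Heq]]. exact (Heq y Hy). Qed.

(* [bump k] increases up to [k / (k + 1)] and decreases afterwards, while [f]
   decreases and preserves [bump k]: at a point [x] strictly between a fixed
   point and [k / (k + 1)], both [x] and [f x] lie on the same monotone branch,
   so [bump k (f x) <> bump k x]. *)
Lemma fk_fixpoint y : 0 <= y < 1 -> f y = y -> INR k * (1 - y) = y.
Proof.
  intros Hy Hfy. destruct Hf as [Hrange [Hdecr _]].
  pose proof (pos_INR k).
  set (c := INR k / (INR k + 1)).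
  assert (Hc : (INR k + 1) * c = INR k) by (unfold c; field; lra).
  destruct (total_order_T ((INR k + 1) * y) (INR k)) as [[Hlt|Heq]|Hgt]; [exfalso| lra |exfalso].
  - set (x := (y + c) / 2).
    assert (y < x) by (unfold x; nra). assert ((INR k + 1) * x < INR k) by (unfold x; nra).
    pose proof (Hdecr y x ltac:(lra) ltac:(nra) ltac:(lra)).
    pose proof (Hrange x ltac:(nra)).
    pose proof (bump_strict_incr k (f x) x Hk ltac:(lra) ltac:(lra) ltac:(lra)).
    rewrite fk_bump in * by nra. lra.
  - set (x := (y + c) / 2).
    assert (x < y) by (unfold x; nra). assert (INR k < (INR k + 1) * x) by (unfold x; nra).
    pose proof (Hdecr x y ltac:(nra) ltac:(lra) ltac:(lra)).
    pose proof (Hrange x ltac:(nra)).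
    pose proof (bump_strict_decr k x (f x) Hk ltac:(lra) ltac:(lra)).
    rewrite fk_bump in * by nra. lra.
Qed.

Lemma D_k_eq_1 y : 0 <= y < 1 -> D f k y = 1.
Proof.
  intros Hy. pose proof (fk_pos y Hy) as Hfy.
  rewrite D_eq_geom by exact Hfy.
  destruct (Req_dec y (f y)) as [E|E].
  - rewrite <- E in Hfy |- *. rewrite Rdiv_diag, geom_at_1 by lra.
    replace ((1 - y) / y * INR k) with (INR k * (1 - y) / y) by (field; lra).
    rewrite (fk_fixpoint y Hy (eq_sym E)). field. lra.
  - rewrite Rmult_comm, Rmult_div_assoc, (Rmult_comm _ (1 - y)).
    rewrite (bump_eq_geom k y (f y) Hfy E (eq_sym (fk_bump y ltac:(lra)))).
    apply Rdiv_diag. lra.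
Qed.

Lemma D_eq_geom_ratio j y : 0 <= y < 1 ->
  D f j y = geom j (y / f y) / geom k (y / f y).
Proof.
  intros Hy. pose proof (fk_pos y Hy).
  rewrite <- (Rdiv_1_r (D f j y)), <- (D_k_eq_1 y Hy), !D_eq_geom by lra.
  field. split; [|lra].
  apply Rgt_not_eq, geom_gt0; [lia|]. apply Rle_mult_inv_pos; lra.
Qed.

Lemma fk_ratio_le y1 y2 : 0 <= y1 -> y1 <= y2 -> y2 < 1 ->
  y1 / f y1 <= y2 / f y2.
Proof.
  intros H1 H12 H2.
  pose proof (fk_pos y1 ltac:(lra)). pose proof (fk_pos y2 ltac:(lra)).
  pose proof (fk_antitone y1 y2 H1 ltac:(lra)).
  apply Rmult_le_compat; try lra.
  - left. apply Rinv_0_lt_compat. lra.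
  - apply Rinv_le_contravar; lra.
Qed.

End Fk.

Theorem mainTheorem9 (k : nat) (f : R -> R) :
  (1 <= k)%nat -> is_fk k f ->
  forall j : nat, (1 <= j <= k)%nat ->
  forall y1 y2 : R, 0 <= y1 -> y1 <= y2 -> y2 < 1 ->
  D f j y2 <= D f j y1.
Proof.
  intros Hk Hf j Hj y1 y2 H1 H12 H2.
  rewrite !(D_eq_geom_ratio k f Hk Hf) by lra.
  apply geom_ratio_antitone; [lia|lia|split].
  - apply Rle_mult_inv_pos; [lra|]. apply (fk_pos k f Hf). lra.
  - exact (fk_ratio_le k f Hf y1 y2 H1 H12 H2).
Qed.
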